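(* Let $(R,\mathfrak{m})$ be a finite commutative local ring which is uniserial, and let $k$ be the length of $R$ as a module over itself. Let $K$ be a field of characteristic zero. Then $\mathrm{St}^K_2(R)$ is a direct sum of exactly $k$ irreducible $\mathrm{GL}_2(R)$-representations, which are pairwise non-isomorphic and none of which is trivial. In particular, for a Dedekind domain $\mathcal{O}$ and a nonzero prime ideal $\mathfrak{p}$, $\mathrm{St}^K_2(\mathcal{O}/\mathfrak{p}^k)$ has length exactly $k$ as a $\mathrm{GL}_2(\mathcal{O}/\mathfrak{p}^k)$-representation.
   Context: A ring is uniserial if its ideals are linearly ordered by inclusion. For $n=2$, the Tits complex $\mathcal{T}_2(R)$ is the discrete set of rank one direct summands $L$ of $R^2$ with $L$ and $R^2/L$ free (i.e. lines spanned by unimodular vectors), with its natural $\mathrm{GL}_2(R)$-action, and $\mathrm{St}^K_2(R)=\tilde H_{0}(\mathcal{T}_2(R);K)$, the kernel of the augmentation $K[\mathcal{T}_2(R)]\to K$, viewed as a $\mathrm{GL}_2(R)$-representation. *)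

From HB Require Import structures.
From mathcomp Require Import all_boot all_order all_algebra all_fingroup.
From mathcomp Require Import mxrepresentation.
Set Implicit Arguments. Unset Strict Implicit. Unset Printing Implicit Defensive.
Import GRing.Theory.
Local Open Scope ring_scope.

Section RingNotions.
Variable R : finComUnitRingType.

Definition is_ideal (I : {set R}) : bool :=
  [&& 0 \in I,
      [forall x in I, [forall y in I, x + y \in I]] &
      [forall r : R, [forall x in I, r * x \in I]]].

Definition is_maximal_ideal (M : {set R}) : Prop :=
  [/\ is_ideal M, M != setT &
      forall J : {set R}, is_ideal J -> M \subset J -> J = M \/ J = setT].

Definition local_ring : Prop :=
  exists M, is_maximal_ideal M /\ forall M', is_maximal_ideal M' -> M' = M.

Definition uniserial : Prop :=
  forall I J : {set R}, is_ideal I -> is_ideal J -> I \subset J \/ J \subset I.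

Definition strict_ideal_chain (m : nat) (c : nat -> {set R}) : Prop :=
  (forall i, i <= m -> is_ideal (c i))%N /\
  (forall i, i < m -> c i \proper c i.+1)%N.

(* length of R as a module over itself: the maximal length of a strict chain
   of submodules *)
Definition ring_length (k : nat) : Prop :=
  (exists c, strict_ideal_chain k c) /\
  (forall m c, strict_ideal_chain m c -> m <= k)%N.

End RingNotions.

Section Tits.
Variable R : finComUnitRingType.

Definition unimodular (u : 'rV[R]_2) : bool :=
  [exists w : 'cV[R]_2, u *m w == 1%:M].

Definition line (u : 'rV[R]_2) : {set 'rV[R]_2} := [set r *: u | r : R].

Definition Tits : {set {set 'rV[R]_2}} :=
  [set L | [exists u, unimodular u && (L == line u)]].

Definition nTits := #|Tits|.

Definition lineAct (g : {'GL_2[R]}) (L : {set 'rV[R]_2}) : {set 'rV[R]_2} :=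
  [set v *m GLval g | v in L].

Lemma lineAct_line g u : lineAct g (line u) = line (u *m GLval g).
Proof.
rewrite /lineAct /line -imset_comp; apply: eq_imset => r /=.
by rewrite scalemxAl.
Qed.

Lemma unimodular_act (g : {'GL_2[R]}) u :
  unimodular u -> unimodular (u *m GLval g).
Proof.
case/existsP=> w /eqP Hw; apply/existsP; exists (invmx (GLval g) *m w).
rewrite !mulmxA -(mulmxA u) mulmxV; last by case: g => A HA; rewrite unitmxE -unitmxE; exact: HA.
by have -> : u *m 1%:M = u := mulmx1 u; rewrite Hw.
Qed.

Lemma lineAct_Tits g L : L \in Tits -> lineAct g L \in Tits.
Proof.
rewrite !inE => /existsP [u /andP [Hu /eqP ->]].
apply/existsP; exists (u *m GLval g); rewrite unimodular_act //=.
by rewrite lineAct_line.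
Qed.

Lemma lineAct1 L : lineAct 1%g L = L.
Proof.
rewrite /lineAct GL_1E.
by rewrite (eq_imset _ (fun v => mulmx1 v)) imset_id.
Qed.

Lemma lineActM (g h : {'GL_2[R]}) L :
  lineAct (g * h)%g L = lineAct h (lineAct g L).
Proof.
rewrite /lineAct -imset_comp GL_MxE; apply: eq_imset => v /=.
by rewrite mulmxA.
Qed.

End Tits.

Section PermRep.
Variables (R : finComUnitRingType) (K : fieldType).

Definition permRep_mx (g : {'GL_2[R]}) : 'M[K]_(nTits R) :=
  \matrix_(i, j) ((lineAct g (enum_val i) == enum_val j)%:R).

Lemma permRep_mx_repr : mx_repr [set: {'GL_2[R]}] permRep_mx.
Proof.
split.
  apply/matrixP=> i j; rewrite !mxE lineAct1 (inj_eq enum_val_inj).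
  by rewrite eq_sym.
move=> x y _ _; apply/matrixP=> i j; rewrite !mxE.
have Hx : lineAct x (enum_val i) \in Tits R by apply: lineAct_Tits; apply: enum_valP.
pose l0 := enum_rank_in Hx (lineAct x (enum_val i)).
have El0 : enum_val l0 = lineAct x (enum_val i) by rewrite enum_rankK_in.
rewrite (bigD1 l0) //= !mxE El0 eqxx mul1r big1 ?addr0; first by rewrite lineActM.
move=> l Hl; rewrite !mxE.
have -> : (lineAct x (enum_val i) == enum_val l) = false.
  by apply/negbTE; rewrite -El0 (inj_eq enum_val_inj) eq_sym.
by rewrite mul0r.
Qed.

Definition permRep : mx_representation K [set: {'GL_2[R]}] (nTits R) :=
  MxRepresentation permRep_mx_repr.

(* St^K_2(R): the kernel of the augmentation K[T_2(R)] -> K (sum of coordinates),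
   as a subspace (row space) of K[T_2(R)] *)
Definition Steinberg : 'M[K]_(nTits R) := kermx (const_mx 1 : 'M[K]_(nTits R, 1)).

End PermRep.

Definition trivial_submod (F : fieldType) (gT : finGroupType) (G : {group gT})
  (n : nat) (rG : mx_representation F G n) (U : 'M[F]_n) : Prop :=
  \rank U = 1%N /\ forall g, g \in G -> U *m rG g = U.

From HB Require Import structures.
From mathcomp Require Import all_boot all_order all_algebra all_fingroup.
From mathcomp Require Import mxrepresentation.
From mathcomp Require Import ring zify.
Set Implicit Arguments. Unset Strict Implicit. Unset Printing Implicit Defensive.
Import GRing.Theory.
Local Open Scope ring_scope.

(* Let 0 = c_0 < c_1 < ... < c_k = R be the chain of ideals of R. Inside St,
   let St_i be the vectors constant on the classes of the GL_2(R)-invariant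
   equivalence relation "det(u, v) lies in c_i" between lines; this gives a
   strictly decreasing filtration St = St_0 > ... > St_k = 0, and complements
   of its consecutive terms are k nonzero submodules, which together with the
   constants decompose K[T_2(R)] into k + 1 summands. Since R is uniserial,
   hence local, GL_2(R) acts on pairs of lines with the ideal (det(u, v)) as a
   complete invariant, so the centralizer of K[T_2(R)] has dimension at most
   the number of ideals, k + 1. In a semisimple module, a decomposition into
   as many nonzero summands as the dimension of the centralizer has simple,
   pairwise non-isomorphic summands: otherwise splitting a summand, or an
   isomorphism between two of them, would produce one more independent
   central matrix. The trivial summand is the constants, which St meets only
   in 0 in characteristic zero. *)

Section CentralizerCriterion.
Variables (F : fieldType) (gT : finGroupType) (G : {group gT}) (n : nat).
Variable rG : mx_representation F G n.

(* The centralizer algebra of [rG] has dimension at most [m]. *)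
Definition cent_dim_le (m : nat) : Prop :=
  forall (J : finType) (Q : J -> 'M[F]_n), (m < #|J|)%N ->
  (forall a, centgmx rG (Q a)) ->
  exists2 c : J -> F, (exists a, c a != 0) & \sum_a c a *: Q a = 0.

Lemma cent_dim_leW m m' : (m <= m')%N -> cent_dim_le m -> cent_dim_le m'.
Proof. by move=> le_mm' centm J Q /(leq_ltn_trans le_mm'); apply: centm. Qed.

Lemma free_by_witnesses (J : finType) (Q X Y : J -> 'M[F]_n) (c : J -> F) :
  (forall a b, a != b -> X a *m Q b *m Y a = 0) ->
  (forall a, X a *m Q a *m Y a != 0) ->
  \sum_a c a *: Q a = 0 -> forall a, c a = 0.
Proof.
move=> offdiag diag sum0 a.
have : X a *m (\sum_b c b *: Q b) *m Y a = 0 by rewrite sum0 mulmx0 mul0mx.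
rewrite mulmx_sumr mulmx_suml (bigD1 a) //= big1 => [|b ba]; last first.
  by rewrite -scalemxAr -scalemxAl offdiag ?scaler0 // eq_sym.
rewrite addr0 -scalemxAr -scalemxAl => /eqP.
by rewrite scalemx_eq0 (negbTE (diag a)) orbF => /eqP.
Qed.

(* The entries at [ij] embed the centralizer linearly into [F ^ #|T|]. *)
Lemma cent_dim_le_entries (T : finType) (ij : T -> 'I_n * 'I_n) :
  (forall A, centgmx rG A -> (forall t, A (ij t).1 (ij t).2 = 0) -> A = 0) ->
  cent_dim_le #|T|.
Proof.
move=> centA0 J Q ltJ cQ.
pose E : 'M[F]_(#|J|, #|T|) :=
  \matrix_(a, t) Q (enum_val a) (ij (enum_val t)).1 (ij (enum_val t)).2.
have : \rank (kermx E) != 0%N by rewrite mxrank_ker; have := rank_leq_col E; lia.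
rewrite mxrank_eq0 -nz_row_eq0; set z := nz_row _ => z_neq0.
have zE : z *m E = 0 by apply/sub_kermxP/nz_row_sub.
exists (fun a => z 0 (enum_rank a)).
  have [b zb] : exists b, z 0 b != 0.
    apply/existsP; apply: contraR z_neq0 => /existsPn z0.
    by apply/eqP/rowP => b; rewrite mxE; apply/eqP/negbNE/z0.
  by exists (enum_val b); rewrite enum_valK.
apply: centA0 => [|t].
  apply/centgmxP => x Gx; rewrite mulmx_suml mulmx_sumr; apply: eq_bigr => a _.
  by rewrite -scalemxAl -scalemxAr (centgmxP (cQ a) x Gx).
move/matrixP/(_ 0 (enum_rank t)): zE; rewrite !mxE => <-.
rewrite summxE (reindex (@enum_val J predT)) /=; last first.
  by apply: onW_bij; apply: enum_val_bij.
by apply: eq_bigr => a _; rewrite !mxE enum_valK enum_rankK.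
Qed.

Variables (I : finType) (W : I -> 'M[F]_n).
Hypotheses (modW : forall i, mxmodule rG (W i)) (W_neq0 : forall i, W i != 0).
Hypotheses (dxW : mxdirect (\sum_i W i)) (fullW : (1%:M <= \sum_i W i)%MS).
Hypothesis centW : cent_dim_le #|I|.

Let Rest i := (\sum_(j | j != i) W j)%MS.
Let P i := proj_mx (W i) (Rest i).

Let capW_Rest i : (W i :&: Rest i = 0)%MS.
Proof. exact: (mxdirect_sumsP dxW). Qed.

Let full_W_Rest i : (1%:M <= W i + Rest i)%MS.
Proof. by move: fullW; rewrite (bigD1 i). Qed.

Let Rest_module i : mxmodule rG (Rest i).
Proof. by apply: sumsmx_module => j _; apply: modW. Qed.

Let W_sub_Rest i j : j != i -> (W j <= Rest i)%MS.
Proof. by move=> ji; rewrite (sumsmx_sup j). Qed.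

Let P_id i m (X : 'M_(m, n)) : (X <= W i)%MS -> X *m P i = X.
Proof. exact: proj_mx_id (capW_Rest i). Qed.

Let P_0 i j m (X : 'M_(m, n)) : j != i -> (X <= W j)%MS -> X *m P i = 0.
Proof. by move=> ji sXW; rewrite proj_mx_0 // (submx_trans sXW) ?W_sub_Rest. Qed.

(* [proj_mx] unfolds to a product: generic [mulmxA] rewrites would expose it. *)
Let P_idM i m p (X : 'M_(m, n)) (f : 'M_(n, p)) :
  (X <= W i)%MS -> X *m (P i *m f) = X *m f.
Proof. by move=> sXW; rewrite mulmxA P_id. Qed.

Let P_0M i j m p (X : 'M_(m, n)) (f : 'M_(n, p)) :
  j != i -> (X <= W j)%MS -> X *m (P i *m f) = 0.
Proof. by move=> ji sXW; rewrite mulmxA (P_0 ji) ?mul0mx. Qed.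

Let card_I_option : (#|I| < #|{: option I}|)%N.
Proof. by rewrite card_option. Qed.

Let cent_P_hom i f : (W i <= dom_hom_mx rG f)%MS -> centgmx rG (P i *m f).
Proof.
move=> homf; rewrite -row_full_dom_hom -sub1mx.
apply: submx_trans (full_W_Rest i) _; rewrite addsmx_sub.
apply/andP; split; apply/hom_mxP => x Gx; rewrite !(mulmxA _ (P i) f).
  have WxW : (W i *m rG x <= W i)%MS by apply: (mxmoduleP (modW i)).
  by rewrite !P_id ?(hom_mxP homf).
have RxR : (Rest i *m rG x <= Rest i)%MS by apply: (mxmoduleP (Rest_module i)).
by rewrite !proj_mx_0 ?mul0mx.
Qed.

Let cent_P i : centgmx rG (P i).
Proof. by rewrite -[P i]mulmx1; apply/cent_P_hom/scalar_mx_hom. Qed.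

Lemma summand_mxsimple (redG : mx_completely_reducible rG 1%:M) i :
  mxsimple rG (W i).
Proof.
split=> [||U modU sUW U_neq0]; [exact: modW | exact: W_neq0 |].
apply/idPn => sWU.
have [T modT defUT dxUT] := mx_reducibleS (modW i) (submx1 _) redG modU sUW.
have capUT : (U :&: T = 0)%MS by apply/mxdirect_addsP.
have capTU : (T :&: U = 0)%MS by rewrite capmxC.
have sTW : (T <= W i)%MS by rewrite -defUT addsmxSr.
have T_neq0 : T != 0.
  by apply: contraNneq sWU => T0; rewrite -defUT T0 addsmx0.
have homUT : (W i <= dom_hom_mx rG (proj_mx U T))%MS.
  by rewrite -defUT proj_mx_hom.
have homTU : (W i <= dom_hom_mx rG (proj_mx T U))%MS.
  by rewrite -defUT addsmxC proj_mx_hom.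
(* [W i = U + T] would give [#|I| + 1] independent central projections. *)
pose Q (a : option I) :=
  if a is Some j then (if j == i then P i *m proj_mx U T else P j)
  else P i *m proj_mx T U.
pose X (a : option I) := if a is Some j then (if j == i then U else W j) else T.
have cQ a : centgmx rG (Q a).
  case: a => [j|] /=; last exact: cent_P_hom.
  by case: eqP => _; [exact: cent_P_hom | exact: cent_P].
have [c [a ca_neq0] sum0] := centW card_I_option cQ.
suff : c a = 0 by apply/eqP.
apply: (free_by_witnesses (X := X) (Y := fun=> 1%:M) _ _ sum0).
  move=> [j|] [l|] //= ab; rewrite mulmx1.
  - case: (eqVneq j i) => [ji|ji]; case: (eqVneq l i) => [li|li].
    + by rewrite ji li eqxx in ab.
    + by rewrite (P_0 (j := i)) // eq_sym.
    + by rewrite (P_0M _ ji).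
    + by rewrite (P_0 (j := j)) // eq_sym; apply: contraNneq ab => ->.
  - case: (eqVneq j i) => [_|ji]; last by rewrite (P_0M _ ji).
    by rewrite P_idM // proj_mx_0.
  - case: (eqVneq l i) => [_|li]; last by rewrite (P_0 (j := i)) // eq_sym.
    by rewrite P_idM // proj_mx_0.
move=> [j|] /=; rewrite mulmx1; last by rewrite P_idM // proj_mx_id.
by case: (eqVneq j i) => [_|ji]; [rewrite P_idM // proj_mx_id | rewrite P_id].
Qed.

Lemma summands_nonisomorphic i j : i != j -> ~ mx_iso rG (W i) (W j).
Proof.
move=> ij [f _ hom_f defWf].
have sWf : (W i *m f <= W j)%MS by rewrite defWf.
(* An isomorphism [W i -> W j] gives a central matrix beyond the projections. *)
pose Q (a : option I) := if a is Some l then P l else P i *m f.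
pose X (a : option I) := if a is Some l then W l else W i.
pose Y (a : option I) := if a is Some l then P l else P j.
have cQ a : centgmx rG (Q a).
  by case: a => [l|] /=; [exact: cent_P | exact: cent_P_hom].
have [c [a ca_neq0] sum0] := centW card_I_option cQ.
suff : c a = 0 by apply/eqP.
apply: (free_by_witnesses (X := X) (Y := Y) _ _ sum0).
  move=> [l|] [l'|] //= ne.
  - have ll' : l != l' by apply: contraNneq ne => ->.
    by rewrite (P_0 ll') ?mul0mx.
  - case: (eqVneq l i) => [->|li]; last by rewrite (P_0M _ li) ?mul0mx.
    by rewrite P_idM // (P_0 (j := j)) // eq_sym.
  - case: (eqVneq l' i) => [->|li]; last first.
      by rewrite (P_0 (i := l') (j := i)) ?mul0mx // eq_sym.
    by rewrite (P_id (i := i)) // (P_0 (i := j) (j := i)).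
move=> [l|] /=; first by rewrite !P_id.
by rewrite P_idM // (P_id (i := j)) // (eqmx_eq0 defWf) W_neq0.
Qed.

End CentralizerCriterion.

Section UniserialRing.
Variable R : finComUnitRingType.

Definition pideal (a : R) : {set R} := [set r * a | r : R].

Lemma pidealP (a b : R) : reflect (exists r, b = r * a) (b \in pideal a).
Proof. by apply: (iffP imsetP) => [[r _ ->]|[r ->]]; exists r. Qed.

Lemma mem_pideal (a : R) : a \in pideal a.
Proof. by apply/pidealP; exists 1; rewrite mul1r. Qed.

Lemma pideal_ideal (a : R) : is_ideal (pideal a).
Proof.
apply/and3P; split.
- by apply/pidealP; exists 0; rewrite mul0r.
- apply/forall_inP => _ /pidealP[r ->]; apply/forall_inP => _ /pidealP[s ->].
  by apply/pidealP; exists (r + s); rewrite mulrDl.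
- apply/forallP => r; apply/forall_inP => _ /pidealP[s ->].
  by apply/pidealP; exists (r * s); rewrite mulrA.
Qed.

Lemma pidealMl (a e : R) : e \is a GRing.unit -> pideal (e * a) = pideal a.
Proof.
move=> ue; apply/setP => x; apply/pidealP/pidealP => [[r ->]|[r ->]].
  by exists (r * e); rewrite mulrA.
by exists (r / e); rewrite mulrA divrK.
Qed.

Section Ideal.
Variable I : {set R}.
Hypothesis idI : is_ideal I.

Lemma ideal0 : 0 \in I.
Proof. by case/and3P: idI. Qed.

Lemma idealD x y : x \in I -> y \in I -> x + y \in I.
Proof. by case/and3P: idI => _ /forall_inP hD _ /hD/forall_inP; apply. Qed.

Lemma idealMl r x : x \in I -> r * x \in I.
Proof. by case/and3P: idI => _ _ /forallP/(_ r)/forall_inP; apply. Qed.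

Lemma idealMl_unit e x : e \is a GRing.unit -> (e * x \in I) = (x \in I).
Proof.
move=> ue; apply/idP/idP => [|/idealMl//].
by rewrite -{2}(mulKr ue x); apply: idealMl.
Qed.

End Ideal.

Lemma ideal_setT : is_ideal [set: R].
Proof.
apply/and3P; split; rewrite ?inE //.
  by apply/forall_inP => x _; apply/forall_inP => y _; rewrite inE.
by apply/forallP => r; apply/forall_inP => x _; rewrite inE.
Qed.

Lemma ideal_set0 : is_ideal [set (0 : R)].
Proof.
apply/and3P; split; rewrite ?inE //.
  apply/forall_inP => _ /set1P->; apply/forall_inP => _ /set1P->.
  by rewrite inE addr0.
by apply/forallP => r; apply/forall_inP => _ /set1P->; rewrite inE mulr0.
Qed.

Lemma strict_ideal_chain_subset k (c : nat -> {set R}) :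
  strict_ideal_chain k c -> forall i j, (i <= j <= k)%N -> c i \subset c j.
Proof.
case=> _ c_proper i j /andP[]; elim: j => [|j IHj].
  by rewrite leqn0 => /eqP->.
rewrite leq_eqVlt => /orP[/eqP-> //|lt_ij] lt_jk.
apply: subset_trans (IHj lt_ij (ltnW lt_jk)) _.
by case/properP: (c_proper j lt_jk).
Qed.

(* A chain of maximal length cannot be extended at either end. *)
Lemma strict_ideal_chain_ends k (c : nat -> {set R}) : ring_length R k ->
  strict_ideal_chain k c -> c 0%N = [set 0] /\ c k = [set: R].
Proof.
move=> [_ maxk] [c_ideal c_proper]; split; apply/eqP/idPn => ne.
  pose c' i := if i is j.+1 then c j else [set (0 : R)].
  suff /maxk : strict_ideal_chain k.+1 c' by rewrite ltnn.
  split=> [[|i] lei|[|i] lti] /=; [exact: ideal_set0 | exact: c_ideal | |].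
    rewrite properEneq eq_sym ne; apply/subsetP => _ /set1P->.
    exact/ideal0/c_ideal.
  exact: c_proper.
pose c' i := if (i <= k)%N then c i else [set: R].
suff /maxk : strict_ideal_chain k.+1 c' by rewrite ltnn.
split=> [i lei|i lti]; rewrite /c'.
  by case: ifP => [/c_ideal|_] //; exact: ideal_setT.
rewrite ltnS in lti; rewrite lti; case: ltnP => [lt|le]; first exact: c_proper.
have -> : i = k by apply/eqP; rewrite eqn_leq lti le.
by rewrite properEneq ne subsetT.
Qed.

Hypothesis uniR : uniserial R.

(* Comparability of principal ideals makes the non-units closed under addition:
   [R] is local. *)
Lemma nonunitrD (a b : R) : a \isn't a GRing.unit -> b \isn't a GRing.unit ->
  a + b \isn't a GRing.unit.
Proof.
wlog /subsetP/(_ a (mem_pideal a))/pidealP[r ->] :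
    a b / pideal a \subset pideal b.
  move=> wlog_ab.
  have [/wlog_ab|/wlog_ab] := uniR (pideal_ideal a) (pideal_ideal b); first exact.
  by rewrite addrC => /[apply]/[apply].
move=> _ nb; rewrite -{2}[b]mul1r -mulrDl.
by rewrite unitrM negb_and nb orbT.
Qed.

Lemma unitr1B (x : R) : x \isn't a GRing.unit -> 1 - x \is a GRing.unit.
Proof.
move=> nx; apply: contraT => n1.
by have := nonunitrD n1 nx; rewrite subrK unitr1.
Qed.

Lemma unitr_unimodular (s t x y : R) :
  s * x + t * y = 1 -> t \isn't a GRing.unit -> s \is a GRing.unit.
Proof.
move=> sxty nt; apply: contraT => ns.
have nM (a b : R) : a \isn't a GRing.unit -> a * b \isn't a GRing.unit.
  by move=> na; rewrite unitrM negb_and na.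
by have := nonunitrD (nM _ x ns) (nM _ y nt); rewrite sxty unitr1.
Qed.

Lemma eq_pideal_unit (a b : R) :
  pideal a = pideal b -> exists2 e, e \is a GRing.unit & b = e * a.
Proof.
move=> eq_ab.
have /pidealP[x bx] : b \in pideal a by rewrite eq_ab mem_pideal.
have /pidealP[y ay] : a \in pideal b by rewrite -eq_ab mem_pideal.
have [ux|nx] := boolP (x \is a GRing.unit); first by exists x.
(* otherwise [a = y x a] with [1 - y x] a unit, so [a = 0] *)
have : a * (1 - y * x) = 0.
  by rewrite mulrBr mulr1 [a * _]mulrC -mulrA -bx -ay subrr.
have u1B : 1 - y * x \is a GRing.unit.
  by rewrite unitr1B // unitrM negb_and nx orbT.
move/(canRL (mulrK u1B)); rewrite mul0r => a0.
by exists 1; rewrite ?unitr1 // bx a0 !mulr0.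
Qed.

Lemma eq_pideal_unitE (a b : R) : pideal a = pideal b ->
  (a \is a GRing.unit) = (b \is a GRing.unit).
Proof. by case/eq_pideal_unit => e ue ->; rewrite unitrM ue. Qed.

Lemma card_ideals_le k : ring_length R k ->
  (#|[set I : {set R} | is_ideal I]| <= k.+1)%N.
Proof.
case=> _ maxk; set Ids := [set I | _].
(* sorted by size, the ideals form a strict chain *)
pose le (A B : {set R}) := (#|A| <= #|B|)%N.
pose s := sort le (enum Ids).
have le_total : total le by move=> A B; apply: leq_total.
have s_sorted : sorted le s := sort_sorted le_total _.
have s_uniq : uniq s by rewrite sort_uniq enum_uniq.
have s_ideal i : (i < size s)%N -> is_ideal (nth set0 s i).
  by move=> lti; have := mem_nth set0 lti; rewrite mem_sort mem_enum inE.
rewrite cardE -(size_sort le); case Es : (size s) => [//|m].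
suff /maxk : strict_ideal_chain m (nth set0 s) by [].
split=> [i lei|i lti]; first by apply: s_ideal; rewrite Es ltnS.
have lti1 : (i.+1 < size s)%N by rewrite Es ltnS.
have neq : nth set0 s i != nth set0 s i.+1.
  by rewrite nth_uniq // ?neq_ltn ?ltnSn // ltnW.
have [sub|sub] := uniR (s_ideal _ (ltnW lti1)) (s_ideal _ lti1).
  by rewrite properEneq neq sub.
move: neq; rewrite eq_sym eqEcard sub.
by have := (sortedP set0 s_sorted) i lti1; rewrite /le => ->.
Qed.

End UniserialRing.

Section Plane.
Variable R : finComUnitRingType.

Lemma ord2P (j : 'I_2) : j = 0 \/ j = 1.
Proof. by case: j => [[|[|//]]] ?; [left|right]; apply: val_inj. Qed.

Lemma sum_ord2 (V : nmodType) (F : 'I_2 -> V) : \sum_(i < 2) F i = F 0 + F 1.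
Proof.
by rewrite !big_ord_recl big_ord0 addr0; congr (F _ + F _); apply: val_inj.
Qed.

Definition rv2 (a b : R) : 'rV[R]_2 := \row_(j < 2) if j == 0 then a else b.

Definition mx2 (p q r s : R) : 'M[R]_2 :=
  \matrix_(i, j) if i == 0 then (if j == 0 then p else q)
                 else (if j == 0 then r else s).

Lemma rv2_0 a b : rv2 a b 0 0 = a. Proof. by rewrite mxE. Qed.
Lemma rv2_1 a b : rv2 a b 0 1 = b. Proof. by rewrite mxE. Qed.

Lemma rv2E (u : 'rV[R]_2) : u = rv2 (u 0 0) (u 0 1).
Proof. by apply/rowP => j; rewrite mxE; case: (ord2P j) => ->. Qed.

Lemma mx2E (A : 'M[R]_2) : A = mx2 (A 0 0) (A 0 1) (A 1 0) (A 1 1).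
Proof.
apply/matrixP => i j; rewrite mxE.
by case: (ord2P i) => ->; case: (ord2P j) => ->.
Qed.

Lemma mul_rv2 a b p q r s :
  rv2 a b *m mx2 p q r s = rv2 (a * p + b * r) (a * q + b * s).
Proof. by apply/rowP => j; rewrite !mxE sum_ord2 !mxE; case: (ord2P j) => ->. Qed.

Lemma det_mx2 p q r s : \det (mx2 p q r s) = p * s - q * r.
Proof.
rewrite (expand_det_row _ 0) sum_ord2 /cofactor !det_mx11 !mxE /=.
by rewrite expr0 expr1 mul1r mulN1r mulrN.
Qed.

Definition det2 (u v : 'rV[R]_2) := u 0 0 * v 0 1 - u 0 1 * v 0 0.

Lemma det2_rv2 a b c d : det2 (rv2 a b) (rv2 c d) = a * d - b * c.
Proof. by rewrite /det2 !rv2_0 !rv2_1. Qed.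

Lemma det2M (u v : 'rV[R]_2) (A : 'M[R]_2) :
  det2 (u *m A) (v *m A) = det2 u v * \det A.
Proof.
rewrite [u]rv2E [v]rv2E [A]mx2E !mul_rv2 !det2_rv2 det_mx2.
by ring.
Qed.

Lemma det2Zl (a : R) (u v : 'rV[R]_2) : det2 (a *: u) v = a * det2 u v.
Proof. by rewrite /det2 !mxE; ring. Qed.

Lemma det2Zr (a : R) (u v : 'rV[R]_2) : det2 u (a *: v) = a * det2 u v.
Proof. by rewrite /det2 !mxE; ring. Qed.

Lemma det2uu (u : 'rV[R]_2) : det2 u u = 0.
Proof. by rewrite /det2 mulrC subrr. Qed.

Lemma det2C (u v : 'rV[R]_2) : det2 v u = - det2 u v.
Proof. by rewrite /det2; ring. Qed.

Lemma unimodularP (u : 'rV[R]_2) :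
  reflect (exists x y, u 0 0 * x + u 0 1 * y = 1) (unimodular u).
Proof.
apply: (iffP existsP) => [[w /eqP/matrixP/(_ 0 0)]|[x [y uxy]]].
  by rewrite !mxE sum_ord2; exists (w 0 0), (w 1 0).
exists (\col_(i < 2) if i == 0 then x else y).
by apply/eqP/matrixP => i j; rewrite !ord1 !mxE sum_ord2 !mxE.
Qed.

Lemma unimodular_mul (u : 'rV[R]_2) A :
  A \in unitmx -> unimodular u -> unimodular (u *m A).
Proof.
move=> uA /existsP[w /eqP uw]; apply/existsP; exists (invmx A *m w).
by rewrite !mulmxA mulmxK // uw.
Qed.

Lemma unimodular_rv2 (a : R) : unimodular (rv2 1 a).
Proof. by apply/unimodularP; exists 1, 0; rewrite rv2_0 rv2_1; ring. Qed.

Lemma lineP (u v : 'rV[R]_2) : reflect (exists r, v = r *: u) (v \in line u).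
Proof. by apply: (iffP imsetP) => [[r _ ->]|[r ->]]; exists r. Qed.

Lemma mem_line (u : 'rV[R]_2) : u \in line u.
Proof. by apply/lineP; exists 1; rewrite scale1r. Qed.

Lemma line_mulmx (u : 'rV[R]_2) (A : 'M[R]_2) :
  line (u *m A) = [set x *m A | x in line u].
Proof.
by rewrite /line -imset_comp; apply: eq_imset => r /=; rewrite scalemxAl.
Qed.

Lemma eq_line_mulmx (u v : 'rV[R]_2) (A : 'M[R]_2) :
  line u = line v -> line (u *m A) = line (v *m A).
Proof. by rewrite !line_mulmx => ->. Qed.

Lemma lineZ (e : R) (u : 'rV[R]_2) : e \is a GRing.unit -> line (e *: u) = line u.
Proof.
move=> ue; apply/setP => x; apply/lineP/lineP => [[r ->]|[r ->]].
  by exists (r * e); rewrite scalerA.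
by exists (r / e); rewrite scalerA divrK.
Qed.

Lemma eq_line_unit (u v : 'rV[R]_2) : unimodular u -> line u = line v ->
  exists2 e, e \is a GRing.unit & v = e *: u.
Proof.
case/unimodularP => x [y uxy] eq_uv.
have /lineP[r vr] : v \in line u by rewrite eq_uv mem_line.
have /lineP[s us] : u \in line v by rewrite -eq_uv mem_line.
have sr1 : s * r = 1.
  have : ((s * r) *: u) 0 0 * x + ((s * r) *: u) 0 1 * y = 1.
    by rewrite -scalerA -vr -us.
  by rewrite !mxE -!mulrA -!mulrDr uxy !mulr1.
by exists r => //; apply/unitrPr; exists s; rewrite mulrC.
Qed.

Lemma det2_eq0_line (u v : 'rV[R]_2) : unimodular u -> unimodular v ->
  det2 u v = 0 -> line u = line v.
Proof.
case/unimodularP => x [y uxy] /unimodularP [x' [y' vxy]] d0.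
(* with [u . (x, y) = 1], the scalar [v . (x, y)] maps [u] to [v] *)
set c := v 0 0 * x + v 0 1 * y.
have vc : v = c *: u.
  apply/rowP => j; rewrite mxE; apply/eqP; rewrite -subr_eq0.
  case: (ord2P j) => ->.
  - have -> : v 0 0 - c * u 0 0 =
                v 0 0 * (1 - (u 0 0 * x + u 0 1 * y)) - y * det2 u v.
      by rewrite /c /det2; ring.
    by rewrite uxy d0 subrr !mulr0 subr0.
  - have -> : v 0 1 - c * u 0 1 =
                v 0 1 * (1 - (u 0 0 * x + u 0 1 * y)) + x * det2 u v.
      by rewrite /c /det2; ring.
    by rewrite uxy d0 subrr !mulr0 addr0.
have uc : c \is a GRing.unit.
  apply/unitrPr; exists (u 0 0 * x' + u 0 1 * y').
  by move: vxy; rewrite vc !mxE => <-; ring.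
by rewrite vc lineZ.
Qed.

End Plane.

Section PairOrbits.
Variable R : finComUnitRingType.
Hypothesis uniR : uniserial R.

Definition same_pair_orbit (u u' w w' : 'rV[R]_2) :=
  exists2 A : 'M[R]_2, A \in unitmx &
    line (u *m A) = line w /\ line (u' *m A) = line w'.

Lemma same_pair_orbit_mx u u' w w' A :
  A \in unitmx -> u *m A = w -> u' *m A = w' -> same_pair_orbit u u' w w'.
Proof. by move=> uA <- <-; exists A. Qed.

Lemma same_pair_orbit_sym u u' w w' :
  same_pair_orbit u u' w w' -> same_pair_orbit w w' u u'.
Proof.
case=> A uA [eq_uw eq_uw']; exists (invmx A); first by rewrite unitmx_inv.
rewrite -(eq_line_mulmx (invmx A) eq_uw) -(eq_line_mulmx (invmx A) eq_uw').
by rewrite !mulmxK.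
Qed.

Lemma same_pair_orbit_trans u u' v v' w w' :
  same_pair_orbit u u' v v' -> same_pair_orbit v v' w w' ->
  same_pair_orbit u u' w w'.
Proof.
case=> A uA [eq_uv eq_uv'] [B uB [eq_vw eq_vw']].
exists (A *m B); first by rewrite unitmx_mul uA.
by rewrite !mulmxA (eq_line_mulmx B eq_uv) (eq_line_mulmx B eq_uv').
Qed.

Lemma same_pair_orbit_normal (u u' : 'rV[R]_2) :
  unimodular u -> unimodular u' ->
  if det2 u u' \is a GRing.unit then same_pair_orbit u u' (rv2 1 0) (rv2 0 1)
  else exists2 t, pideal t = pideal (det2 u u') &
         same_pair_orbit u u' (rv2 1 0) (rv2 1 t).
Proof.
move=> uu uu'; have /unimodularP[x [y uxy]] := uu.
(* [A] has determinant [1] and maps [u] to [(1, 0)], so [det2 u u'] is the second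
   coordinate of [u' A]. *)
pose A := mx2 x (- u 0 1) y (u 0 0).
have detA : \det A = 1 by rewrite det_mx2 -uxy; ring.
have uA : A \in unitmx by rewrite unitmxE detA unitr1.
have uAe1 : u *m A = rv2 1 0 by rewrite [u]rv2E mul_rv2 -uxy; congr rv2; ring.
set v := u' *m A; set s := v 0 0; set t := v 0 1.
have det_uu' : det2 u u' = t.
  rewrite -[det2 u u']mulr1 -detA -det2M uAe1.
  by rewrite /det2 rv2_0 rv2_1 mul1r mul0r subr0.
rewrite det_uu'; case: ifP => ut.
  pose B := mx2 1 0 (- s / t) t^-1.
  have uB : B \in unitmx by rewrite unitmxE det_mx2 mul1r mul0r subr0 unitrV.
  apply: (same_pair_orbit_trans (v := rv2 1 0) (v' := v)).
    exact: same_pair_orbit_mx uA uAe1 _.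
  apply: same_pair_orbit_mx uB _ _; first by rewrite mul_rv2; congr rv2; ring.
  rewrite [v]rv2E mul_rv2 -/s -/t mulr1 mulr0 add0r mulrV //; congr rv2.
  by rewrite mulrCA mulrV // mulr1 addrN.
(* [R] being local, the other coordinate of the unimodular [u' A] is a unit *)
have us : s \is a GRing.unit.
  have /unimodularP[x' [y' vxy]] := unimodular_mul uA uu'.
  by apply: (unitr_unimodular uniR vxy); rewrite -/t ut.
exists (s^-1 * t); first by rewrite pidealMl // unitrV.
exists A => //; split; first by rewrite uAe1.
rewrite -/v [v]rv2E -/s -/t -[in RHS](lineZ (rv2 _ _) us); congr line.
apply/rowP => j; rewrite !mxE.
by case: (ord2P j) => -> /=; rewrite ?mulr1 ?mulVKr.
Qed.

Lemma same_pair_orbit_det2 (u u' w w' : 'rV[R]_2) :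
  unimodular u -> unimodular u' -> unimodular w -> unimodular w' ->
  pideal (det2 u u') = pideal (det2 w w') -> same_pair_orbit u u' w w'.
Proof.
move=> uu uu' uw uw' eq_det.
have := same_pair_orbit_normal uu uu'; have := same_pair_orbit_normal uw uw'.
rewrite -(eq_pideal_unitE uniR eq_det); case: ifP => _.
  move=> ww' uu'0.
  exact: same_pair_orbit_trans uu'0 (same_pair_orbit_sym ww').
move=> [t' et' ww'] [t et uu'0].
have [c uc tc] := eq_pideal_unit uniR (etrans et (etrans eq_det (esym et'))).
apply: same_pair_orbit_trans uu'0 _.
apply: same_pair_orbit_trans (same_pair_orbit_sym ww').
pose C := mx2 1 0 0 c.
have uC : C \in unitmx by rewrite unitmxE det_mx2 mul1r mul0r subr0.
apply: same_pair_orbit_mx uC _ _; rewrite mul_rv2; first by congr rv2; ring.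
by congr rv2; rewrite ?tc; ring.
Qed.

End PairOrbits.

Section TitsVertices.
Variable R : finComUnitRingType.

Local Notation n := (nTits R).
Local Notation Lv i := (enum_val i : {set 'rV[R]_2}).

Lemma line_Tits (u : 'rV[R]_2) : unimodular u -> line u \in Tits R.
Proof. by move=> uu; rewrite inE; apply/existsP; exists u; rewrite uu eqxx. Qed.

Definition base_line := line (rv2 (1 : R) 0).

Lemma base_line_Tits : base_line \in Tits R.
Proof. exact/line_Tits/unimodular_rv2. Qed.

Lemma nTits_gt0 : (0 < n)%N.
Proof. by apply/card_gt0P; exists base_line; apply: base_line_Tits. Qed.

Definition tidx (L : {set 'rV[R]_2}) : 'I_n := enum_rank_in base_line_Tits L.

Lemma tidxK L : L \in Tits R -> Lv (tidx L) = L.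
Proof. exact: enum_rankK_in. Qed.

Lemma enum_val_Tits (i : 'I_n) : Lv i \in Tits R.
Proof. exact: enum_valP. Qed.

Lemma enum_valK_tidx (i : 'I_n) : tidx (Lv i) = i.
Proof. by apply: enum_val_inj; rewrite tidxK ?enum_val_Tits. Qed.

Lemma lineAct_Lv (g : {'GL_2[R]}) (i : 'I_n) : lineAct g (Lv i) \in Tits R.
Proof. exact/lineAct_Tits/enum_val_Tits. Qed.

Lemma lineActK (g : {'GL_2[R]}) L : lineAct g^-1 (lineAct g L) = L.
Proof. by rewrite -lineActM mulgV lineAct1. Qed.

Lemma lineActVK (g : {'GL_2[R]}) L : lineAct g (lineAct g^-1 L) = L.
Proof. by rewrite -lineActM mulVg lineAct1. Qed.

(* A chosen unimodular generator of a vertex (junk value [0] elsewhere). *)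
Definition tgen (L : {set 'rV[R]_2}) : 'rV[R]_2 :=
  if [pick u | unimodular u && (L == line u)] is Some u then u else 0.

Lemma tgenP L : L \in Tits R -> unimodular (tgen L) /\ L = line (tgen L).
Proof.
rewrite inE => /existsP[u uL]; rewrite /tgen.
by case: pickP => [v /andP[uv /eqP ->] //|/(_ u)]; rewrite uL.
Qed.

Lemma tgen_act (g : {'GL_2[R]}) L : L \in Tits R ->
  exists2 e, e \is a GRing.unit & tgen (lineAct g L) = e *: (tgen L *m GLval g).
Proof.
move=> TL; have [uu eu] := tgenP TL; have [_ ev] := tgenP (lineAct_Tits g TL).
apply: eq_line_unit; first exact: unimodular_mul (GL_unit g) uu.
by rewrite -ev [in RHS]eu lineAct_line.
Qed.

Lemma tgen_line (u : 'rV[R]_2) : unimodular u ->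
  exists2 e, e \is a GRing.unit & tgen (line u) = e *: u.
Proof.
by move=> uu; have [_ eu] := tgenP (line_Tits uu); apply: eq_line_unit.
Qed.

(* Independent of the chosen generators, which are unique up to units. *)
Definition det_ideal (i j : 'I_n) := pideal (det2 (tgen (Lv i)) (tgen (Lv j))).

Lemma det_ideal_orbit (uniR : uniserial R) (i j i' j' : 'I_n) :
  det_ideal i j = det_ideal i' j' ->
  exists g : {'GL_2[R]}, lineAct g (Lv i) = Lv i' /\ lineAct g (Lv j) = Lv j'.
Proof.
move=> eq_det.
have [ui ei] := tgenP (enum_val_Tits i); have [uj ej] := tgenP (enum_val_Tits j).
have [ui' ei'] := tgenP (enum_val_Tits i').
have [uj' ej'] := tgenP (enum_val_Tits j').
have [A uA [Ai Aj]] := same_pair_orbit_det2 uniR ui uj ui' uj' eq_det.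
exists (Sub A uA : {'GL_2[R]}).
by rewrite ei ej ei' ej' !lineAct_line.
Qed.

Lemma Tits_transitive (uniR : uniserial R) (i j : 'I_n) :
  exists g : {'GL_2[R]}, lineAct g (Lv i) = Lv j.
Proof.
have [|g [gi _]] := @det_ideal_orbit uniR i i j j; last by exists g.
by rewrite /det_ideal !det2uu.
Qed.

Definition det_rel (I : {set R}) (i j : 'I_n) :=
  det2 (tgen (Lv i)) (tgen (Lv j)) \in I.

Section DetRel.
Variable I : {set R}.
Hypothesis idI : is_ideal I.

Lemma det_rel_act (g : {'GL_2[R]}) (i j : 'I_n) :
  det_rel I (tidx (lineAct g (Lv i))) (tidx (lineAct g (Lv j))) = det_rel I i j.
Proof.
rewrite /det_rel !tidxK ?lineAct_Lv //.
have [e ue ->] := tgen_act g (enum_val_Tits i).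
have [f uf ->] := tgen_act g (enum_val_Tits j).
rewrite det2Zl det2Zr det2M mulrA idealMl_unit ?unitrM ?ue ?uf //.
by rewrite mulrC idealMl_unit // -unitmxE; exact: (GL_unit g).
Qed.

Lemma det_rel_refl (i : 'I_n) : det_rel I i i.
Proof. by rewrite /det_rel det2uu ideal0. Qed.

Lemma det_rel_sym (i j : 'I_n) : det_rel I i j -> det_rel I j i.
Proof. by rewrite /det_rel => Iij; rewrite det2C -mulN1r idealMl. Qed.

Lemma det_rel_trans (i j l : 'I_n) :
  det_rel I i j -> det_rel I j l -> det_rel I i l.
Proof.
rewrite /det_rel => Iij Ijl.
have [/unimodularP[x [y vxy]] _] := tgenP (enum_val_Tits j).
set u := tgen (Lv i) in Iij *; set v := tgen (Lv j) in Iij Ijl vxy *.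
set w := tgen (Lv l) in Ijl *.
(* a Plücker relation, using [v 0 0 * x + v 0 1 * y = 1] *)
have -> : det2 u w = (u 0 0 * x + u 0 1 * y) * det2 v w
                     + (w 0 0 * x + w 0 1 * y) * det2 u v.
  by rewrite -[det2 u w]mulr1 -vxy /det2; ring.
by rewrite idealD ?idealMl.
Qed.

End DetRel.

End TitsVertices.

Section PermutationModule.
Variables (R : finComUnitRingType) (K : fieldType).
Hypothesis uniR : uniserial R.

Local Notation n := (nTits R).
Local Notation Lv i := (enum_val i : {set 'rV[R]_2}).
Local Notation rG := (permRep R K).
Local Notation St := (Steinberg R K).

Lemma mulmx_permRep m (B : 'M[K]_(m, n)) (g : {'GL_2[R]}) i j :
  (B *m rG g) i j = B i (tidx (lineAct g^-1 (Lv j))).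
Proof.
rewrite !mxE (bigD1 (tidx (lineAct g^-1 (Lv j)))) //= big1 => [|l l_neq].
  by rewrite mxE tidxK ?lineActVK ?eqxx ?mulr1 ?addr0 ?lineAct_Lv.
rewrite mxE; case: eqP => [gl|_]; last by rewrite mulr0.
by move: l_neq; rewrite -gl lineActK enum_valK_tidx eqxx.
Qed.

Lemma permRep_mulmx m (B : 'M[K]_(n, m)) (g : {'GL_2[R]}) i j :
  (rG g *m B) i j = B (tidx (lineAct g (Lv i))) j.
Proof.
rewrite !mxE (bigD1 (tidx (lineAct g (Lv i)))) //= big1 => [|l l_neq].
  by rewrite mxE tidxK ?eqxx ?mul1r ?addr0 ?lineAct_Lv.
rewrite mxE; case: eqP => [gl|_]; last by rewrite mul0r.
by move: l_neq; rewrite gl enum_valK_tidx eqxx.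
Qed.

Lemma centgmx_permRep_act (A : 'M[K]_n) (g : {'GL_2[R]}) (i j : 'I_n) :
  centgmx rG A -> A (tidx (lineAct g (Lv i))) (tidx (lineAct g (Lv j))) = A i j.
Proof.
move/centgmxP/(_ g (in_setT g))/matrixP/(_ i (tidx (lineAct g (Lv j)))).
rewrite mulmx_permRep permRep_mulmx tidxK ?lineAct_Lv //.
by rewrite lineActK enum_valK_tidx.
Qed.

Lemma centgmx_permRep_det_ideal (A : 'M[K]_n) (i j i' j' : 'I_n) :
  centgmx rG A -> det_ideal i j = det_ideal i' j' -> A i' j' = A i j.
Proof.
move=> cA /(det_ideal_orbit uniR)[g [gi gj]].
by rewrite -(centgmx_permRep_act g i j cA) gi gj !enum_valK_tidx.
Qed.

(* A central matrix is determined by its entries at one pair of vertices for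
   each ideal of [R]. *)
Lemma cent_dim_permRep : cent_dim_le rG #|[set I : {set R} | is_ideal I]|.
Proof.
set Ids := [set I | _]; pose i0 := tidx (base_line R).
pose rep (b : 'I_#|Ids|) : 'I_n * 'I_n :=
  odflt (i0, i0) [pick p : 'I_n * 'I_n | det_ideal p.1 p.2 == enum_val b].
rewrite -[X in cent_dim_le _ X]card_ord; apply: (cent_dim_le_entries (ij := rep)).
move=> A cA A_rep; apply/matrixP => i j; rewrite mxE.
have Ids_ij : det_ideal i j \in Ids by rewrite inE pideal_ideal.
have := A_rep (enum_rank_in Ids_ij (det_ideal i j)); rewrite /rep.
case: pickP => [p /eqP|/(_ (i, j))]; rewrite enum_rankK_in ?eqxx //= => ep.
by rewrite (centgmx_permRep_det_ideal cA ep).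
Qed.

Lemma mx11_eq0 (M : 'M[K]_1) : (M == 0) = (M 0 0 == 0).
Proof.
apply/eqP/eqP => [->|M0]; first by rewrite mxE.
by apply/matrixP => a b; rewrite !ord1 M0 mxE.
Qed.

Lemma Steinberg_module : mxmodule rG St.
Proof.
apply/mxmoduleP => g _; rewrite /Steinberg sub_kermx -mulmxA.
have -> : rG g *m (const_mx 1 : 'M[K]_(n, 1)) = const_mx 1.
  by apply/matrixP => i j; rewrite permRep_mulmx !mxE.
by rewrite mulmx_ker.
Qed.

Lemma sub_Steinberg (v : 'rV[K]_n) : (v <= St)%MS = (\sum_j v 0 j == 0).
Proof.
rewrite /Steinberg sub_kermx mx11_eq0 mxE.
by under eq_bigr do rewrite mxE mulr1.
Qed.

Definition consts : 'M[K]_n := const_mx 1.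

Lemma consts_act g : consts *m rG g = consts.
Proof. by apply/matrixP => i j; rewrite mulmx_permRep !mxE. Qed.

Lemma consts_module : mxmodule rG consts.
Proof. by apply/mxmoduleP => g _; rewrite consts_act. Qed.

Definition ones : 'rV[K]_n := const_mx 1.

Lemma ones_consts : (ones <= consts)%MS.
Proof.
rewrite (_ : ones = row (tidx (base_line R)) consts) ?row_sub //.
by apply/rowP => j; rewrite !mxE.
Qed.

(* The vectors constant on the classes of [det_rel I]. *)
Definition rel_const (I : {set R}) : 'M[K]_n :=
  (\bigcap_(p : 'I_n * 'I_n | det_rel I p.1 p.2)
     kermx (delta_mx p.1 0 - delta_mx p.2 0 : 'M_(n, 1)))%MS.

Lemma rel_constP I (v : 'rV[K]_n) :
  reflect (forall i j, det_rel I i j -> v 0 i = v 0 j) (v <= rel_const I)%MS.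
Proof.
have vdelta i j :
    (v *m (delta_mx i 0 - delta_mx j 0 : 'M_(n, 1)) == 0) = (v 0 i == v 0 j).
  by rewrite mulmxBr -!colE mx11_eq0 !mxE subr_eq0.
apply: (iffP sub_bigcapmxP) => [vI i j Iij|vI [i j] /= Iij].
  by have := vI (i, j) Iij; rewrite sub_kermx vdelta => /eqP.
by rewrite sub_kermx vdelta (vI _ _ Iij).
Qed.

Lemma rel_const_module I : is_ideal I -> mxmodule rG (rel_const I).
Proof.
move=> idI; apply/mxmoduleP => g _; apply/row_subP => r; rewrite row_mul.
apply/rel_constP => i j Iij; rewrite !mulmx_permRep.
by apply/rel_constP; [exact: row_sub | rewrite det_rel_act].
Qed.

Lemma rel_constS (I J : {set R}) : I \subset J -> (rel_const J <= rel_const I)%MS.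
Proof.
move=> sIJ; apply/row_subP => r; apply/rel_constP => i j Iij.
by apply/rel_constP; [exact: row_sub | exact: (subsetP sIJ)].
Qed.

Lemma ones_rel_const I : (ones <= rel_const I)%MS.
Proof. by apply/rel_constP => i j _; rewrite !mxE. Qed.

Hypothesis charK0 : [pchar K] =i pred0.

Lemma nTits_neq0 : (n%:R : K) != 0.
Proof. by rewrite ((pcharf0P K).1 charK0 n) -lt0n nTits_gt0. Qed.

Lemma permRep_completely_reducible : mx_completely_reducible rG 1%:M.
Proof.
apply: mx_Maschke_pchar; apply/(pnatP _ (cardG_gt0 _)) => p _ _.
by rewrite inE /= charK0.
Qed.

Lemma sub_ones_Steinberg (v : 'rV[K]_n) :
  (v - ((\sum_j v 0 j) / n%:R) *: ones <= St)%MS.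
Proof.
rewrite sub_Steinberg; under eq_bigr do rewrite !mxE mulr1.
rewrite sumrB sumr_const card_ord -[X in _ - X]mulr_natr.
by rewrite divfK ?nTits_neq0 ?subrr.
Qed.

Lemma consts_Steinberg_full : (1%:M <= consts + St)%MS.
Proof.
apply/row_subP => r; set v := row r 1%:M.
rewrite -[v](subrK (((\sum_j v 0 j) / n%:R) *: ones)) addrC.
apply: addmx_sub_adds; first exact: scalemx_sub ones_consts.
exact: sub_ones_Steinberg.
Qed.

(* Fixed vectors are constant by transitivity, and a constant vector with zero
   coordinate sum vanishes since [n != 0] in [K]. *)
Lemma fixed_Steinberg_eq0 (v : 'rV[K]_n) :
  (v <= St)%MS -> (forall g, v *m rG g = v) -> v = 0.
Proof.
move=> vSt vfix; set i0 := tidx (base_line R).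
have v_const j : v 0 j = v 0 i0.
  have [g gj] := Tits_transitive uniR i0 j.
  move/rowP/(_ j): (vfix g).
  by rewrite mulmx_permRep -gj lineActK enum_valK_tidx.
move: vSt; rewrite sub_Steinberg (eq_bigr _ (fun j _ => v_const j)).
rewrite sumr_const card_ord -mulr_natr mulf_eq0 (negbTE nTits_neq0) orbF.
move=> /eqP v0.
by apply/rowP => j; rewrite v_const v0 mxE.
Qed.

Lemma capmx_consts_Steinberg : (consts :&: St = 0)%MS.
Proof.
apply/eqP/rowV0P => v; rewrite sub_capmx => /andP[/submxP[x ->] xSt].
by apply: fixed_Steinberg_eq0 => // g; rewrite -mulmxA consts_act.
Qed.

End PermutationModule.

Section Filtration.
Variables (R : finComUnitRingType) (K : fieldType) (k : nat) (c : nat -> {set R}).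
Hypotheses (uniR : uniserial R) (charK0 : [pchar K] =i pred0).
Hypotheses (lenR : ring_length R k) (chain_c : strict_ideal_chain k c).

Local Notation n := (nTits R).
Local Notation rG := (permRep R K).
Local Notation St := (Steinberg R K).

Let c_ideal i : (i <= k)%N -> is_ideal (c i).
Proof. by case: chain_c => c_ideal _; apply: c_ideal. Qed.

(* [St_i]: the vectors of [St] constant on the classes of "the determinant lies
   in [c i]", with the index clamped at [k]. *)
Definition filt i : 'M[K]_n := (St :&: rel_const K (c (minn i k)))%MS.

Lemma filt_module i : mxmodule rG (filt i).
Proof.
apply: capmx_module; first exact: Steinberg_module.
by apply/rel_const_module/c_ideal; rewrite geq_minr.
Qed.

Lemma filtS i : (filt i.+1 <= filt i)%MS.
Proof.
apply/capmxS/rel_constS => //; apply: (strict_ideal_chain_subset chain_c).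
by apply/andP; split; lia.
Qed.

Lemma filt0 : (filt 0 :=: St)%MS.
Proof.
apply/eqmxP; rewrite capmxSl sub_capmx submx_refl /=.
apply/row_subP => r; apply/rel_constP => i j.
rewrite min0n (strict_ideal_chain_ends lenR chain_c).1 /det_rel inE => /eqP d0.
have [ui ei] := tgenP (enum_val_Tits i); have [uj ej] := tgenP (enum_val_Tits j).
by congr (_ _ _); apply/enum_val_inj; rewrite ei ej; apply: det2_eq0_line.
Qed.

Lemma filtk : filt k = 0.
Proof.
apply/eqP/rowV0P => v; rewrite sub_capmx => /andP[vSt /rel_constP v_const].
apply: (fixed_Steinberg_eq0 uniR charK0 vSt) => g; apply/rowP => j.
rewrite mulmx_permRep; apply: v_const.
by rewrite minnn (strict_ideal_chain_ends lenR chain_c).2 /det_rel inE.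
Qed.

Lemma det_rel_base (I : {set R}) (a : R) : is_ideal I ->
  det_rel I (tidx (base_line R)) (tidx (line (rv2 1 a))) = (a \in I).
Proof.
move=> idI.
rewrite /det_rel !tidxK ?base_line_Tits ?line_Tits ?unimodular_rv2 //.
have [x ux ->] := tgen_line (unimodular_rv2 (0 : R)).
have [y uy ->] := tgen_line (unimodular_rv2 a).
by rewrite det2Zl det2Zr det2_rv2 !idealMl_unit // mul1r mul0r subr0.
Qed.

(* For [a] in [c i.+1] but not in [c i], the indicator of the [c i]-class of
   the base line, shifted to coordinate sum zero, lies in [St_i] but not in
   [St_(i+1)]: it separates the base line from [line (1, a)]. *)
Lemma filt_proper i : (i < k)%N -> exists v : 'rV[K]_n,
  (v <= filt i)%MS /\ ~~ (v <= filt i.+1)%MS.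
Proof.
move=> lt_ik; have [_ c_proper] := chain_c.
have [_ [a ca1 nca]] := properP (c_proper i lt_ik).
rewrite /filt (minn_idPl (ltnW lt_ik)) (minn_idPl lt_ik).
have idci := c_ideal (ltnW lt_ik); have idci1 := c_ideal lt_ik.
set i0 := tidx (base_line R); set ia := tidx (line (rv2 1 a)).
pose ind : 'rV[K]_n := \row_j (det_rel (c i) i0 j)%:R.
have ind_const : (ind <= rel_const K (c i))%MS.
  apply/rel_constP => j j' jj'; rewrite !mxE.
  have [i0j|ni0j] := boolP (det_rel (c i) i0 j).
    by rewrite (det_rel_trans idci i0j jj').
  case: (boolP (det_rel (c i) i0 j')) => // i0j'.
  by rewrite (det_rel_trans idci i0j' (det_rel_sym idci jj')) in ni0j.
exists (ind - ((\sum_j ind 0 j) / n%:R) *: ones R K); split.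
  rewrite sub_capmx sub_ones_Steinberg //.
  by rewrite addmx_sub ?eqmx_opp ?scalemx_sub ?ones_rel_const.
apply/negP; rewrite sub_capmx => /andP[_ /rel_constP/(_ i0 ia)].
rewrite det_rel_base // ca1 => /(_ isT); rewrite !mxE det_rel_refl //.
by rewrite det_rel_base // (negbTE nca) => /addIr/eqP; rewrite oner_eq0.
Qed.

Definition layer_split i : mxsplits rG (filt i) (filt i.+1) :=
  mx_reducibleS (filt_module i) (submx1 _) (permRep_completely_reducible charK0)
    (filt_module i.+1) (filtS i).

Definition layer i : 'M[K]_n := let: MxSplits L _ _ _ := layer_split i in L.

Lemma layer_spec i :
  [/\ mxmodule rG (layer i), (filt i.+1 + layer i :=: filt i)%MS &
       (filt i.+1 :&: layer i = 0)%MS].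
Proof. by rewrite /layer; case: (layer_split i) => L ? ? /mxdirect_addsP. Qed.

Lemma layer_sub i : (layer i <= filt i)%MS.
Proof. by have [_ <- _] := layer_spec i; apply: addsmxSr. Qed.

Lemma layer_neq0 i : (i < k)%N -> layer i != 0.
Proof.
move=> lt_ik; apply/eqP => L0; have [_ defL _] := layer_spec i.
have [v [vi /negP]] := filt_proper lt_ik; apply; apply: submx_trans vi _.
by rewrite -defL L0 addsmx0.
Qed.

Lemma filt_layers d : (d <= k)%N ->
  (filt (k - d) <= \sum_(k - d <= i < k) layer i)%MS /\
  \rank (filt (k - d)) = (\sum_(k - d <= i < k) \rank (layer i))%N.
Proof.
elim: d => [|d IHd] lt_dk; first by rewrite subn0 filtk sub0mx mxrank0 !big_geq.
have [IH1 IH2] := IHd (ltnW lt_dk).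
have [_ defL capL] := layer_spec (k - d.+1).
have succ_kd : (k - d.+1).+1 = (k - d)%N by lia.
have lt_kd : (k - d.+1 < k)%N by lia.
rewrite !(big_ltn lt_kd) succ_kd.
split; first by rewrite -defL succ_kd addsmxC addsmxS.
by rewrite -defL (mxrank_disjoint_sum capL) succ_kd IH2 addnC.
Qed.

Lemma sum_layers :
  (\sum_(i < k) layer i :=: St)%MS /\ \rank St = (\sum_(i < k) \rank (layer i))%N.
Proof.
have [sub_sum rank_sum] := filt_layers (leqnn k).
rewrite subnn !big_mkord in sub_sum rank_sum.
split; last by rewrite -filt0 rank_sum.
apply/eqmxP/andP; split; last by rewrite -filt0.
by apply/sumsmx_subP => i _; rewrite (submx_trans (layer_sub i)) ?capmxSl.
Qed.

Lemma layers_direct : mxdirect (\sum_(i < k) layer i).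
Proof. by rewrite mxdirectE /= sum_layers.1 sum_layers.2. Qed.

(* Together with the trivial summand [consts], the layers decompose the whole
   permutation module. *)
Definition piece (i : 'I_k.+1) : 'M[K]_n :=
  if unlift ord0 i is Some j then layer j else consts R K.

Lemma piece_lift (j : 'I_k) : piece (lift ord0 j) = layer j.
Proof. by rewrite /piece liftK. Qed.

Lemma piece0 : piece ord0 = consts R K.
Proof. by rewrite /piece unlift_none. Qed.

Lemma sum_pieces : (\sum_i piece i = consts R K + \sum_(j < k) layer j)%MS.
Proof. by rewrite big_ord_recl piece0; under eq_bigr do rewrite piece_lift. Qed.

Lemma piece_module i : mxmodule rG (piece i).
Proof.
rewrite /piece; case: unliftP => [j _|_]; last exact: consts_module.
by have [] := layer_spec j.
Qed.

Lemma piece_neq0 i : piece i != 0.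
Proof.
rewrite /piece; case: unliftP => [j _|_]; first exact: layer_neq0.
apply/eqP/matrixP => /(_ (tidx (base_line R)) (tidx (base_line R))).
by rewrite !mxE => /eqP; rewrite oner_eq0.
Qed.

Lemma pieces_direct : mxdirect (\sum_i piece i).
Proof.
have capCL : (consts R K :&: \sum_(j < k) layer j = 0)%MS.
  have sLS : (\sum_(j < k) layer j <= St)%MS by rewrite sum_layers.1.
  apply/eqP; rewrite -submx0.
  by rewrite -[X in (_ <= X)%MS](capmx_consts_Steinberg uniR charK0) capmxS.
rewrite mxdirectE /= sum_pieces mxrank_disjoint_sum // sum_layers.1.
rewrite sum_layers.2 big_ord_recl piece0; apply/eqP; congr (_ + _)%N.
by apply: eq_bigr => j _; rewrite piece_lift.
Qed.

Lemma pieces_full : (1%:M <= \sum_i piece i)%MS.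
Proof.
rewrite sum_pieces; apply: submx_trans (consts_Steinberg_full R charK0) _.
by rewrite addsmxS // sum_layers.1.
Qed.

Let cent_dim_pieces : cent_dim_le rG #|'I_k.+1|.
Proof.
rewrite card_ord; apply: cent_dim_leW (card_ideals_le uniR lenR) _.
exact: cent_dim_permRep.
Qed.

Lemma layer_mxsimple (j : 'I_k) : mxsimple rG (layer j).
Proof.
rewrite -piece_lift.
apply: summand_mxsimple piece_module piece_neq0 pieces_direct pieces_full
  cent_dim_pieces (permRep_completely_reducible charK0) _.
Qed.

Lemma layers_nonisomorphic (i j : 'I_k) :
  i != j -> ~ mx_iso rG (layer i) (layer j).
Proof.
rewrite -!piece_lift => ij.
apply: summands_nonisomorphic piece_module piece_neq0 pieces_direct pieces_full
  cent_dim_pieces _ _ _.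
by apply: contra ij => /eqP/lift_inj ->.
Qed.

Lemma layer_nontrivial (j : 'I_k) : ~ trivial_submod rG (layer j).
Proof.
move=> [_ layer_fixed]; have /rowV0Pn[v vL v_neq0] := layer_neq0 (ltn_ord j).
case/eqP: v_neq0; apply: (fixed_Steinberg_eq0 uniR charK0).
  by rewrite (submx_trans vL) // -sum_layers.1 (sumsmx_sup j).
move=> g; have /submxP[x ->] := vL.
by rewrite -mulmxA layer_fixed ?inE.
Qed.

End Filtration.

Theorem mainTheorem6 (R : finComUnitRingType) (k : nat) (K : fieldType)
  (HR_local : local_ring R) (HR_uniserial : uniserial R)
  (HR_length : ring_length R k) (HK_char0 : [pchar K] =i pred0) :
  exists U : 'I_k -> 'M[K]_(nTits R),
    [/\ forall i, mxsimple (permRep R K) (U i),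
        mxdirect (\sum_i U i),
        (\sum_i U i == Steinberg R K)%MS,
        forall i j, i != j -> ~ mx_iso (permRep R K) (U i) (U j) &
        forall i, ~ trivial_submod (permRep R K) (U i)].
Proof.
have [[c chain_c] _] := HR_length.
exists (layer HK_char0 chain_c); split.
- exact: layer_mxsimple.
- exact: layers_direct.
- exact/eqmxP/(sum_layers HR_uniserial HK_char0 HR_length chain_c).1.
- exact: layers_nonisomorphic.
- exact: layer_nontrivial.
Qed.
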